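(* Let $\{f_n\}_{n\ge 0}$ be the Fine numbers, determined by $f_0=1$, $f_1=0$ and $2(n+1)f_n=(7n-5)f_{n-1}+2(2n-1)f_{n-2}$ for $n\ge 2$. Then the sequence $\{f_n\}_{n\ge 2}$ is log-convex.
   Context: The Fine number $f_n$ counts Dyck paths from $(0,0)$ to $(2n,0)$ with no hills; the recurrence given determines them ($f_2=1,f_3=2,f_4=6,f_5=18,\dots$). A sequence $a_0,a_1,\ldots$ of nonnegative real numbers is log-convex if $a_{k-1}a_{k+1}\ge a_k^2$ for all $k\ge 1$. *)

From mathcomp Require Import all_boot all_order all_algebra.
Set Implicit Arguments. Unset Strict Implicit. Unset Printing Implicit Defensive.
Import Order.TTheory GRing.Theory Num.Theory.
Local Open Scope ring_scope.

(* fine_pair n = (f_n, f_{n+1}) *)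
Fixpoint fine_pair (n : nat) : rat * rat :=
  match n with
  | 0%N => (1, 0)
  | m.+1 =>
      let (a, b) := fine_pair m in
      (* a = f_m, b = f_{m+1}; compute f_{m+2} with n' = m+2 *)
      (b, ((7 * (m.+2)%:R - 5) * b + 2 * (2 * (m.+2)%:R - 1) * a)
            / (2 * (m.+3)%:R))
  end.

Definition fine (n : nat) : rat := (fine_pair n).1.

Lemma fine0 : fine 0 = 1. Proof. by []. Qed.
Lemma fine1 : fine 1 = 0. Proof. by []. Qed.
Lemma fine_rec (n : nat) : (2 <= n)%N ->
  2 * (n.+1)%:R * fine n =
  (7 * n%:R - 5) * fine n.-1 + 2 * (2 * n%:R - 1) * fine n.-2.
Proof.
case: n => [|[|m]] //= _; rewrite /fine /=.
case: (fine_pair m) => a b /=.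
rewrite mulrC divfK //.
by rewrite mulf_neq0 // pnatr_eq0.
Qed.

Definition log_convex (a : nat -> rat) : Prop :=
  (forall k, 0 <= a k) /\ (forall k, (1 <= k)%N -> a k.-1 * a k.+1 >= a k ^+ 2).

From mathcomp Require Import all_boot all_order all_algebra.
From mathcomp Require Import ring lra.
Import Order.TTheory GRing.Theory Num.Theory.
Local Open Scope ring_scope.

(* The ratio [f_(n+1)/f_n] lies in [[(4n+2)/(n+2), (4n+6)/(n+3)]] for
   [n >= 3], and this window is preserved by the recurrence.  Since the upper
   end of the window for [n-1] equals the lower end for [n], the ratios are
   nondecreasing, which is log-convexity. *)

Section RatioWindow.

Context {R : realFieldType}.

Lemma ratio_window_step (x a b c : R) : 3 <= x -> 0 < a ->
    (4 * x + 2) * a <= (x + 2) * b -> (x + 3) * b <= (4 * x + 6) * a ->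
    2 * (x + 3) * c = (7 * x + 9) * b + (4 * x + 6) * a ->
  [/\ 0 < b, (4 * x + 6) * b <= (x + 3) * c & (x + 4) * c <= (4 * x + 10) * b].
Proof.
move=> x_ge3 a_gt0 lo hi rec.
have b_gt0 : 0 < b by nra.
split=> //.
- have -> : (x + 3) * c = ((7 * x + 9) * b + (4 * x + 6) * a) / 2.
    by rewrite -rec; field.
  lra.
- (* the upper bound gains the slack [42 x b] plus a multiple of the lower one *)
  have key : 2 * (x + 3) * (4 * x + 2) * ((4 * x + 10) * b - (x + 4) * c)
      = 42 * x * b + (x + 4) * (4 * x + 6) * ((x + 2) * b - (4 * x + 2) * a).
    have -> : 2 * (x + 3) * (4 * x + 2) * ((4 * x + 10) * b - (x + 4) * c)
        = 2 * (x + 3) * (4 * x + 2) * (4 * x + 10) * b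
          - (4 * x + 2) * (x + 4) * (2 * (x + 3) * c) by ring.
    by rewrite rec; ring.
  nra.
Qed.

Lemma sqr_le_mul_of_ratios (p q a b c : R) : 0 < p -> 0 < a -> 0 < b ->
  p * b <= q * a -> q * b <= p * c -> b ^+ 2 <= a * c.
Proof. move=> p_gt0 a_gt0 b_gt0 hab hbc; nra. Qed.

End RatioWindow.

Lemma fine_recS n : 2 * (n%:R + 3) * fine n.+2
  = (7 * n%:R + 9) * fine n.+1 + (4 * n%:R + 6) * fine n.
Proof.
have e2 : n.+2%:R = n%:R + 2 :> rat by rewrite -addn2 natrD.
have e3 : n.+3%:R = n%:R + 3 :> rat by rewrite -addn3 natrD.
have := fine_rec (n := n.+2) isT; rewrite /= e2 e3 => ->.
ring.
Qed.

Definition fine_ratio_window n := [/\ 0 < fine n,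
  (4 * n%:R + 2) * fine n <= (n%:R + 2) * fine n.+1
  & (n%:R + 3) * fine n.+1 <= (4 * n%:R + 6) * fine n].

Lemma fine_ratio_window_ge3 {n} : (3 <= n)%N -> fine_ratio_window n.
Proof.
elim: n => [//|n IH]; rewrite leq_eqVlt => /orP[/eqP[<-] | n_ge3].
  by split; vm_compute.
have [f_gt0 lo hi] := IH n_ge3.
have x_ge3 : 3 <= n%:R :> rat by rewrite (ler_nat _ 3).
have [] := @ratio_window_step _ _ _ _ _ x_ge3 f_gt0 lo hi (fine_recS n).
by rewrite /fine_ratio_window -natr1; split; lra.
Qed.

Lemma fine_gt0 {n} : (2 <= n)%N -> 0 < fine n.
Proof.
rewrite leq_eqVlt => /orP[/eqP<- | n_ge3]; first by vm_compute.
by have [] := fine_ratio_window_ge3 n_ge3.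
Qed.

Lemma fine_sqr_le {n} : (3 <= n)%N -> fine n ^+ 2 <= fine n.-1 * fine n.+1.
Proof.
case: n => [//|n]; rewrite ltnS leq_eqVlt => /orP[/eqP<- | n_ge3].
  by vm_compute.
have [f_gt0 _ hi] := fine_ratio_window_ge3 n_ge3.
have [f'_gt0 lo _] := fine_ratio_window_ge3 (ltnW n_ge3 : (3 <= n.+1)%N).
apply: (@sqr_le_mul_of_ratios _ (n.+1%:R + 2) (4 * n.+1%:R + 2)) lo.
- by rewrite ltr_wpDl.
- exact: f_gt0.
- exact: f'_gt0.
- by move: hi; rewrite -natr1; lra.
Qed.

Theorem corollary3p2 : log_convex (fun k => fine k.+2).
Proof.
split=> [k | [|k] k_ge1].
- exact/ltW/fine_gt0.
- exfalso; by move: k_ge1.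
- exact: (fine_sqr_le (n := k.+3)).
Qed.
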